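(* It is undecidable whether, for an arbitrary ranked alphabet $\Sigma$, computable strong bimonoid $B$, and bottom-up deterministic $(\Sigma,B)$-wta $\mathcal{A}$, there is a crisp-deterministic $(\Sigma,B)$-wta $\mathcal{B}$ such that $[\![\mathcal{B}]\!]^{\mathrm{init}}=[\![\mathcal{A}]\!]^{\mathrm{init}}$.
   Context: Ranked alphabet $\Sigma$ ($\Sigma^{(0)}\ne\emptyset$), trees $T_\Sigma$. A strong bimonoid $(B,\oplus,\otimes,\mathbb{0},\mathbb{1})$: commutative monoid $(B,\oplus,\mathbb{0})$, monoid $(B,\otimes,\mathbb{1})$, $\mathbb{0}\ne\mathbb{1}$, $\mathbb{0}$ multiplicatively absorbing, no distributivity; it is computable if $B$ is a recursive set and $\oplus,\otimes$ are computable. $(\Sigma,B)$-wta $\mathcal{A}=(Q,\delta,F)$: $Q$ finite nonempty, $\delta_k:Q^k\times\Sigma^{(k)}\times Q\to B$, $F:Q\to B$. $h_{\mathrm{V}(\mathcal{A})}:T_\Sigma\to B^Q$: $h_{\mathrm{V}(\mathcal{A})}(\sigma(\xi_1,\dots,\xi_k))_q=\bigoplus_{q_1,\dots,q_k}\big(\bigotimes_{i=1}^k h_{\mathrm{V}(\mathcal{A})}(\xi_i)_{q_i}\big)\otimes\delta_k(q_1\dots q_k,\sigma,q)$; $[\![\mathcal{A}]\!]^{\mathrm{init}}(\xi)=\bigoplus_q h_{\mathrm{V}(\mathcal{A})}(\xi)_q\otimes F_q$. Bottom-up deterministic: for all $k,\sigma,q_1,\dots,q_k$ at most one $q$ with $\delta_k(q_1\dots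 q_k,\sigma,q)\ne\mathbb{0}$. Crisp-deterministic: exactly one $q$ with $\delta_k(q_1\dots q_k,\sigma,q)=\mathbb{1}$ and all others $\mathbb{0}$. *)

From mathcomp Require Import all_boot.

Set Implicit Arguments.
Unset Strict Implicit.
Unset Printing Implicit Defensive.

Record ranked_alphabet := RankedAlphabet {
  sym : finType;
  rank : sym -> nat
}.

Definition has_nullary (S : ranked_alphabet) : Prop :=
  exists s : sym S, rank s = 0.

(* Trees over a set of labels; T_Sigma = the well-ranked ones. *)
Inductive tree (X : Type) : Type :=
  Node : X -> seq (tree X) -> tree X.

Fixpoint well_ranked (S : ranked_alphabet) (t : tree (sym S)) : bool :=
  match t with
  | Node s ch =>
      (size ch == rank s) &&
      (fix go (l : seq (tree (sym S))) : bool :=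
         match l with
         | [::] => true
         | x :: l' => well_ranked x && go l'
         end) ch
  end.

(* Strong bimonoid: (B,+,0) commutative monoid, (B,*,1) monoid,
   0 <> 1, 0 multiplicatively absorbing; no distributivity. *)
Record strong_bimonoid := StrongBimonoid {
  sb_car :> Type;
  sb_add : sb_car -> sb_car -> sb_car;
  sb_mul : sb_car -> sb_car -> sb_car;
  sb_zero : sb_car;
  sb_one : sb_car;
  sb_addA : forall x y z, sb_add x (sb_add y z) = sb_add (sb_add x y) z;
  sb_addC : forall x y, sb_add x y = sb_add y x;
  sb_add0r : forall x, sb_add sb_zero x = x;
  sb_mulA : forall x y z, sb_mul x (sb_mul y z) = sb_mul (sb_mul x y) z;
  sb_mul1r : forall x, sb_mul sb_one x = x;
  sb_mulr1 : forall x, sb_mul x sb_one = x;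
  sb_mul0r : forall x, sb_mul sb_zero x = sb_zero;
  sb_mulr0 : forall x, sb_mul x sb_zero = sb_zero;
  sb_zero_neq_one : sb_zero <> sb_one
}.

(* A (Sigma,B)-wta with finite state set Q:
   delta s t q = delta_k(t, s, q) for k = rank s, t a k-tuple of states. *)
Record wta (S : ranked_alphabet) (B : strong_bimonoid) (Q : finType) := Wta {
  delta : forall s : sym S, (rank s).-tuple Q -> Q -> B;
  final : Q -> B
}.
Arguments delta {S B Q} w s t q.
Arguments final {S B Q} w q.

Section Semantics.
Variables (S : ranked_alphabet) (B : strong_bimonoid) (Q : finType).
Variable (A : wta S B Q).

(* h_{V(A)} : the vector of state weights of a tree (meaningful on
   well-ranked trees). *)
Fixpoint hV (xi : tree (sym S)) : Q -> B :=
  match xi with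
  | Node s ch =>
      let hs := (fix go (l : seq (tree (sym S))) : seq (Q -> B) :=
                   match l with
                   | [::] => [::]
                   | x :: l' => hV x :: go l'
                   end) ch in
      fun q =>
        \big[@sb_add B / sb_zero B]_(t : (rank s).-tuple Q)
          sb_mul (\big[@sb_mul B / sb_one B]_(i < rank s)
                    (nth (fun _ => sb_zero B) hs i) (tnth t i))
                 (delta A s t q)
  end.

Definition sem_init (xi : tree (sym S)) : B :=
  \big[@sb_add B / sb_zero B]_(q : Q) sb_mul (hV xi q) (final A q).

Definition bu_deterministic : Prop :=
  forall (s : sym S) (t : (rank s).-tuple Q) (q1 q2 : Q),
    delta A s t q1 <> sb_zero B -> delta A s t q2 <> sb_zero B -> q1 = q2.

Definition crisp_deterministic : Prop :=
  forall (s : sym S) (t : (rank s).-tuple Q),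
    exists q : Q, delta A s t q = sb_one B /\
      (forall q' : Q, q' <> q -> delta A s t q' = sb_zero B).

End Semantics.

Definition has_crisp_equivalent (S : ranked_alphabet) (B : strong_bimonoid)
    (Q : finType) (A : wta S B Q) : Prop :=
  exists (Q' : finType) (A' : wta S B Q'),
    0 < #|Q'| /\ crisp_deterministic A' /\
    (forall xi : tree (sym S), well_ranked xi -> sem_init A' xi = sem_init A xi).

Inductive prog : Type :=
  | PZero : prog
  | PSucc : prog
  | PProj : nat -> prog
  | PComp : prog -> seq prog -> prog
  | PPrim : prog -> prog -> prog
  | PMu : prog -> prog.

Inductive eval : prog -> seq nat -> nat -> Prop :=
  | ev_zero v : eval PZero v 0
  | ev_succ x v : eval PSucc (x :: v) x.+1
  | ev_proj i v : eval (PProj i) v (nth 0 v i)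
  | ev_comp f gs v ws y :
      evals gs v ws -> eval f ws y -> eval (PComp f gs) v y
  | ev_prim0 f g v y : eval f v y -> eval (PPrim f g) (0 :: v) y
  | ev_primS f g n v r y :
      eval (PPrim f g) (n :: v) r -> eval g (n :: r :: v) y ->
      eval (PPrim f g) (n.+1 :: v) y
  | ev_mu f v n :
      eval f (n :: v) 0 ->
      (forall m, m < n -> exists k, eval f (m :: v) k.+1) ->
      eval (PMu f) v n
with evals : seq prog -> seq nat -> seq nat -> Prop :=
  | evs_nil v : evals [::] v [::]
  | evs_cons g gs v y ys :
      eval g v y -> evals gs v ys -> evals (g :: gs) v (y :: ys).

Definition npair (x y : nat) : nat := ((x + y) * (x + y).+1) %/ 2 + y.

Fixpoint enc_list (l : seq nat) : nat :=
  match l with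
  | [::] => 0
  | x :: l' => (npair x (enc_list l')).+1
  end.

Fixpoint pcode (p : prog) : nat :=
  match p with
  | PZero => npair 0 0
  | PSucc => npair 1 0
  | PProj i => npair 2 i
  | PComp f gs =>
      npair 3 (npair (pcode f)
        (enc_list ((fix go (l : seq prog) : seq nat :=
                      match l with
                      | [::] => [::]
                      | g :: l' => pcode g :: go l'
                      end) gs)))
  | PPrim f g => npair 4 (npair (pcode f) (pcode g))
  | PMu f => npair 5 (pcode f)
  end.

(* B is a computable strong bimonoid, presented through an injective
   numbering enc : B -> nat whose image is decided by pB, and with
   + and * computed (on codes) by pA and pM. *)
Definition presents (B : strong_bimonoid) (enc : B -> nat)
    (pB pA pM : prog) : Prop :=
  injective enc /\
  (forall x : nat, (exists b : B, enc b = x) -> eval pB [:: x] 1) /\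
  (forall x : nat, (forall b : B, enc b <> x) -> eval pB [:: x] 0) /\
  (forall a b : B, eval pA [:: enc a; enc b] (enc (sb_add a b))) /\
  (forall a b : B, eval pM [:: enc a; enc b] (enc (sb_mul a b))).

(* Encoding of an input instance (Sigma, B, A) as one natural number:
   ranks     : rank of the i-th symbol,
   pB,pA,pM  : programs presenting B; z0, z1 : codes of 0 and 1,
   table     : entries (symbol index, state indices q1..qk, state index q,
               code of delta_k(q1..qk, sigma, q)),
   finals    : code of F_q for the q-th state. *)
Definition entry_code (e : nat * seq nat * nat * nat) : nat :=
  let: (i, ts, q, w) := e in npair i (npair (enc_list ts) (npair q w)).

Definition instance_code (ranks : seq nat) (pB pA pM : prog) (z0 z1 : nat)
    (table : seq (nat * seq nat * nat * nat)) (finals : seq nat) : nat :=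
  enc_list [:: enc_list ranks; pcode pB; pcode pA; pcode pM; z0; z1;
               enc_list (map entry_code table); enc_list finals].

(* c is a code of the instance (Sigma, B presented by enc,pB,pA,pM, A),
   for some numbering of the symbols and of the states and some listing
   of the transition table. *)
Definition describes (c : nat) (S : ranked_alphabet) (B : strong_bimonoid)
    (Q : finType) (A : wta S B Q) (enc : B -> nat) (pB pA pM : prog) : Prop :=
  exists (iS : sym S -> nat) (iQ : Q -> nat) (ranks : seq nat)
         (table : seq (nat * seq nat * nat * nat)) (finals : seq nat),
    [/\ injective iS, (forall s, iS s < size ranks) & #|sym S| = size ranks] /\
    [/\ injective iQ, (forall q, iQ q < size finals) & #|Q| = size finals] /\
    (forall s : sym S, nth 0 ranks (iS s) = rank s) /\
    (forall q : Q, nth 0 finals (iQ q) = enc (final A q)) /\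
    (forall e, e \in table <->
       exists (s : sym S) (t : (rank s).-tuple Q) (q : Q),
         e = (iS s, map iQ t, iQ q, enc (delta A s t q))) /\
    c = instance_code ranks pB pA pM (enc (sb_zero B)) (enc (sb_one B))
          table finals.

Definition decides_crisp_determinizability (d : prog) : Prop :=
  forall (S : ranked_alphabet) (B : strong_bimonoid) (Q : finType)
         (A : wta S B Q) (enc : B -> nat) (pB pA pM : prog) (c : nat),
    has_nullary S -> 0 < #|Q| -> presents enc pB pA pM ->
    bu_deterministic A -> describes c A enc pB pA pM ->
    (has_crisp_equivalent A -> eval d [:: c] 1) /\
    (~ has_crisp_equivalent A -> eval d [:: c] 0).

(* If a program d decided the problem, Kleene's recursion theorem would give
   an instance that knows its own code c: the monadic wta over an arctic
   bimonoid whose weight on a chain of height n is n, truncated at T + 1 if d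
   answers "no" on c after T steps of its clocked evaluation.  The bimonoid
   stays computable, since membership and multiplication only run d on c for
   a bounded number of steps.  A crisp-deterministic wta realises finitely
   many weights, so the instance is crisp-determinisable iff it is truncated,
   i.e. iff d answers "no" on c: d is wrong on c either way. *)

From HB Require Import structures.
From mathcomp Require Import all_boot zify.
From Stdlib Require Import Classical IndefiniteDescription.

Set Implicit Arguments.
Unset Strict Implicit.
Unset Printing Implicit Defensive.

Arguments npair : simpl never.

Section ProgNestedInd.
Variable P : prog -> Prop.
Hypothesis P_zero : P PZero.
Hypothesis P_succ : P PSucc.
Hypothesis P_proj : forall i, P (PProj i).
Hypothesis P_comp :
  forall f gs, P f -> foldr (fun g acc => P g /\ acc) True gs -> P (PComp f gs).
Hypothesis P_prim : forall f g, P f -> P g -> P (PPrim f g).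
Hypothesis P_mu : forall f, P f -> P (PMu f).

Fixpoint prog_nested_ind (p : prog) : P p :=
  match p with
  | PZero => P_zero
  | PSucc => P_succ
  | PProj i => P_proj i
  | PComp f gs =>
      P_comp (prog_nested_ind f)
        ((fix go (l : seq prog) : foldr (fun g acc => P g /\ acc) True l :=
            match l with
            | [::] => I
            | g :: l' => conj (prog_nested_ind g) (go l')
            end) gs)
  | PPrim f g => P_prim (prog_nested_ind f) (prog_nested_ind g)
  | PMu f => P_mu (prog_nested_ind f)
  end.
End ProgNestedInd.

Lemma eval_zero_inv v y : eval PZero v y -> y = 0.
Proof. by move=> H; inversion H. Qed.

Lemma eval_succ_inv v y : eval PSucc v y -> exists x v', v = x :: v' /\ y = x.+1.
Proof. by move=> H; inversion H; exists x, v0. Qed.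

Lemma eval_proj_inv i v y : eval (PProj i) v y -> y = nth 0 v i.
Proof. by move=> H; inversion H. Qed.

Lemma eval_comp_inv f gs v y :
  eval (PComp f gs) v y -> exists ws, evals gs v ws /\ eval f ws y.
Proof. by move=> H; inversion H; exists ws. Qed.

Lemma eval_prim_nil f g y : ~ eval (PPrim f g) [::] y.
Proof. by move=> H; inversion H. Qed.

Lemma eval_prim0_inv f g v y : eval (PPrim f g) (0 :: v) y -> eval f v y.
Proof. by move=> H; inversion H. Qed.

Lemma eval_primS_inv f g n v y : eval (PPrim f g) (n.+1 :: v) y ->
  exists r, eval (PPrim f g) (n :: v) r /\ eval g (n :: r :: v) y.
Proof. by move=> H; inversion H; exists r. Qed.

Lemma eval_mu_inv f v n : eval (PMu f) v n ->
  eval f (n :: v) 0 /\ (forall m, m < n -> exists k, eval f (m :: v) k.+1).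
Proof. by move=> H; inversion H. Qed.

Lemma evals_nil_inv v ws : evals [::] v ws -> ws = [::].
Proof. by move=> H; inversion H. Qed.

Lemma evals_cons_inv g gs v ws : evals (g :: gs) v ws ->
  exists y ys, [/\ ws = y :: ys, eval g v y & evals gs v ys].
Proof. by move=> H; inversion H; exists y, ys. Qed.

Lemma eval_functional p v y1 y2 : eval p v y1 -> eval p v y2 -> y1 = y2.
Proof.
elim/prog_nested_ind: p v y1 y2.
- by move=> v y1 y2 /eval_zero_inv -> /eval_zero_inv ->.
- move=> v y1 y2 /eval_succ_inv [x [v' [-> ->]]].
  by case/eval_succ_inv => [x' [v'' [[-> _] ->]]].
- by move=> i v y1 y2 /eval_proj_inv -> /eval_proj_inv ->.
- move=> f gs IHf IHgs v y1 y2 /eval_comp_inv [ws [E1 H1]].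
  case/eval_comp_inv => [ws' [E2 H2]].
  suff E : ws = ws' by subst; exact: IHf H1 H2.
  elim: gs ws ws' IHgs E1 E2 {H1 H2} => [|g gs IH] ws ws' /= IHgs.
    by move/evals_nil_inv -> => /evals_nil_inv ->.
  case/evals_cons_inv => [y [ys [-> Hy Hys]]].
  case/evals_cons_inv => [y' [ys' [-> Hy' Hys']]].
  by rewrite (IHgs.1 _ _ _ Hy Hy') (IH _ _ IHgs.2 Hys Hys').
- move=> f g IHf IHg [|k v] y1 y2; first by move/eval_prim_nil.
  elim: k y1 y2 => [|k IH] y1 y2.
    by move=> /eval_prim0_inv H1 /eval_prim0_inv H2; exact: IHf H1 H2.
  case/eval_primS_inv => [r [H1 H1']] /eval_primS_inv [r' [H2 H2']].
  by rewrite -(IH _ _ H1 H2) in H2'; exact: IHg H1' H2'.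
- move=> f IHf v n1 n2 /eval_mu_inv [H1 H1'] /eval_mu_inv [H2 H2'].
  case: (ltngtP n1 n2) => // lt.
  + by case: (H2' _ lt) => k Hk; have := IHf _ _ _ H1 Hk.
  + by case: (H1' _ lt) => k Hk; have := IHf _ _ _ H2 Hk.
Qed.

Lemma eval_eq_result p v a b : eval p v a -> a = b -> eval p v b.
Proof. by move=> H <-. Qed.

Lemma eval_projE i v y : y = nth 0 v i -> eval (PProj i) v y.
Proof. by move=> ->; constructor. Qed.

Lemma eval_comp1 f g v a y :
  eval g v a -> eval f [:: a] y -> eval (PComp f [:: g]) v y.
Proof. by move=> Hg Hf; apply: ev_comp Hf; do !constructor. Qed.

Lemma eval_comp2 f g1 g2 v a1 a2 y : eval g1 v a1 -> eval g2 v a2 ->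
  eval f [:: a1; a2] y -> eval (PComp f [:: g1; g2]) v y.
Proof. by move=> H1 H2 Hf; apply: ev_comp Hf; do !constructor. Qed.

Lemma eval_comp3 f g1 g2 g3 v a1 a2 a3 y :
  eval g1 v a1 -> eval g2 v a2 -> eval g3 v a3 ->
  eval f [:: a1; a2; a3] y -> eval (PComp f [:: g1; g2; g3]) v y.
Proof. by move=> H1 H2 H3 Hf; apply: ev_comp Hf; do !constructor. Qed.

Lemma eval_prim_rect f g (F : seq nat -> nat) (G : nat -> nat -> seq nat -> nat) :
  (forall v, eval f v (F v)) -> (forall j r v, eval g (j :: r :: v) (G j r v)) ->
  forall k v, eval (PPrim f g) (k :: v)
                (nat_rect (fun _ => nat) (F v) (fun j r => G j r v) k).
Proof.
move=> Hf Hg; elim=> [|k IH] v /=; first by constructor.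
exact: ev_primS (IH v) _.
Qed.

Fixpoint const_prog (k : nat) : prog :=
  if k is k'.+1 then PComp PSucc [:: const_prog k'] else PZero.
Definition pred_prog := PPrim PZero (PProj 0).
Definition add_prog := PPrim (PProj 0) (PComp PSucc [:: PProj 1]).
Definition sub_prog := PPrim (PProj 0) (PComp pred_prog [:: PProj 1]).
Definition mul_prog := PPrim PZero (PComp add_prog [:: PProj 1; PProj 2]).
Definition ifnz_prog := PPrim (PProj 1) (PProj 2).
Definition eq0_prog := PPrim (const_prog 1) PZero.

Lemma eval_const k v : eval (const_prog k) v k.
Proof.
elim: k => [|k IH] /=; first by constructor.
by apply: eval_comp1 IH _; constructor.
Qed.

Lemma eval_pred k v : eval pred_prog (k :: v) k.-1.
Proof.
have := eval_prim_rect (G := fun j _ _ => j) (@ev_zero)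
  (fun j r v => ev_proj 0 (j :: r :: v)) k v.
by case: k.
Qed.

Lemma eval_add k y v : eval add_prog (k :: y :: v) (k + y).
Proof.
have Hg j r w : eval (PComp PSucc [:: PProj 1]) (j :: r :: w) r.+1.
  by apply: eval_comp1; [apply: eval_projE | constructor].
apply: eval_eq_result (eval_prim_rect (@ev_proj 0) Hg k (y :: v)) _.
by elim: k => //= k ->.
Qed.

Lemma eval_sub b a v : eval sub_prog (b :: a :: v) (a - b).
Proof.
have Hg j r w : eval (PComp pred_prog [:: PProj 1]) (j :: r :: w) r.-1.
  by apply: eval_comp1; [apply: eval_projE | apply: eval_pred].
apply: eval_eq_result (eval_prim_rect (@ev_proj 0) Hg b (a :: v)) _.
by elim: b => [|b /= ->]; rewrite ?subn0 ?subnS.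
Qed.

Lemma eval_mul k y v : eval mul_prog (k :: y :: v) (k * y).
Proof.
have Hg j r w :
    eval (PComp add_prog [:: PProj 1; PProj 2]) (j :: r :: w) (r + nth 0 w 0).
  by apply: eval_comp2; [apply: eval_projE | apply: eval_projE | apply: eval_add].
apply: eval_eq_result (eval_prim_rect (F := fun _ => 0) (@ev_zero) Hg k (y :: v)) _.
by elim: k => //= k ->; rewrite mulSn addnC.
Qed.

Lemma eval_ifnz a x y v :
  eval ifnz_prog (a :: x :: y :: v) (if a is 0 then y else x).
Proof.
apply: eval_eq_result (eval_prim_rect (G := fun _ _ w => nth 0 w 0) (@ev_proj 1)
  (fun j r w => ev_proj 2 _) a (x :: y :: v)) _.
by case: a.
Qed.

Lemma eval_eq0 k v : eval eq0_prog (k :: v) (k == 0).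
Proof.
have := eval_prim_rect (F := fun _ => 1) (G := fun _ _ _ => 0)
  (eval_const 1) (fun j r v => ev_zero _) k v.
by case: k.
Qed.

(** * Evaluation with a clock *)

Definition prim_run (b : nat) (step : nat -> nat -> nat) : nat -> nat :=
  fix go k := if k is j.+1 then (if go j is r.+1 then step j r else 0) else b.

(* Scans the clocked results [h i], [i < j], of a search body: [0] means all
   values so far are positive, [1] that an undefined result came first, and
   [m.+2] that [m] is the least argument with value [0]. *)
Definition mu_search (h : nat -> nat) : nat -> nat :=
  fix go j :=
    if j is i.+1 then
      if go i is 0 then (match h i with 0 => 1 | 1 => i.+2 | _ => 0 end)
      else go i
    else 0.

(* [run p n v] is [y.+1] when [p] yields [y] on [v] using recursion
   searches of length at most [n], and [0] when it does not. *)
Fixpoint run (p : prog) (n : nat) (v : seq nat) : nat :=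
  match p with
  | PZero => 1
  | PSucc => if v is x :: _ then x.+2 else 0
  | PProj i => (nth 0 v i).+1
  | PComp f gs =>
      let rs := map (fun g => run g n v) gs in
      if all (fun r => 0 < r) rs then run f n (map predn rs) else 0
  | PPrim f g =>
      if v is k :: v' then
        prim_run (run f n v') (fun j r => run g n (j :: r :: v')) k
      else 0
  | PMu f => (mu_search (fun j => run f n (j :: v)) n).-1
  end.

Lemma mu_search_spec h j :
  (mu_search h j = 0 -> forall i, i < j -> 1 < h i) /\
  (forall m, mu_search h j = m.+2 -> [/\ m < j, h m = 1 & forall i, i < m -> 1 < h i]).
Proof.
elim: j => [|j [IH0 IH2]] /=; first by split=> // m.
case E: (mu_search h j) => [|s].
  have Hi := IH0 E.
  case Eh: (h j) => [|[|r]]; split=> //.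
  - by move=> m [<-]; split=> //; rewrite ltnSn.
  - by move=> _ i; rewrite ltnS leq_eqVlt => /orP [/eqP -> | /Hi]; rewrite ?Eh.
split=> // m Em; case: (IH2 m); rewrite ?E // => lt h1 hi.
by split=> //; apply: ltnW.
Qed.

Lemma mu_search_found h m : (forall i, i < m -> 1 < h i) -> h m = 1 ->
  forall j, m < j -> mu_search h j = m.+2.
Proof.
move=> Hi Hm; have Hpre j : j <= m -> mu_search h j = 0.
  elim: j => [|j IH] //= lt; rewrite IH ?(ltnW lt) //.
  by case: (h j) (Hi _ lt) => [|[|r]].
elim=> [|j IH] //; rewrite ltnS leq_eqVlt => /orP [/eqP <- | lt] /=.
  by rewrite Hpre // Hm.
by rewrite IH.
Qed.

Lemma run_sound p n v y : run p n v = y.+1 -> eval p v y.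
Proof.
elim/prog_nested_ind: p n v y.
- by move=> n v y [<-]; constructor.
- by move=> n [|x v] y //= [<-]; constructor.
- by move=> i n v y [<-]; constructor.
- move=> f gs IHf IHgs n v y /=.
  case: ifP => // Hall /IHf Hf; apply: ev_comp Hf.
  elim: gs IHgs Hall {IHf} => [|g gs IH] /= IHgs; first by constructor.
  case/andP=> Hg Hgs; constructor; last by apply: IH => //; case: IHgs.
  by apply: (IHgs.1 n); rewrite prednK.
- move=> f g IHf IHg n [|k v] y //=.
  elim: k y => [|k IH] y /=; first by move/IHf; constructor.
  case E: (prim_run _ _ k) => [|r] // /IHg Hg.
  exact: ev_primS (IH _ E) Hg.
- move=> f IHf n v y /= E.
  have E2 : mu_search (fun j => run f n (j :: v)) n = y.+2.
    by move: E; case: (mu_search _ n) => [|[|s]] //= ->.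
  have [_ /(_ _ E2) [_ h1 hi]] := mu_search_spec (fun j => run f n (j :: v)) n.
  constructor; first exact: (IHf n).
  move=> m /hi; case E3: (run f n (m :: v)) => [|[|k]] // _.
  by exists k; apply: (IHf n).
Qed.

Definition eventually_runs (p : prog) (v : seq nat) (y : nat) : Prop :=
  exists n0, forall n, n0 <= n -> run p n v = y.+1.

Lemma eventually_runs_map gs v ws :
  foldr (fun g acc => (forall v y, eval g v y -> eventually_runs g v y) /\ acc)
    True gs ->
  evals gs v ws ->
  exists n0, forall n, n0 <= n -> map (fun g => run g n v) gs = map succn ws.
Proof.
elim: gs ws => [|g gs IH] ws /= IHgs; first by move/evals_nil_inv ->; exists 0.
case/evals_cons_inv => [y [ys [-> Hy Hys]]].
have [N1 H1] := IHgs.1 _ _ Hy; have [N2 H2] := IH _ IHgs.2 Hys.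
exists (maxn N1 N2) => n; rewrite geq_max => /andP [l1 l2] /=.
by rewrite H1 // H2.
Qed.

Lemma eventually_runs_mu f v m :
  (forall v y, eval f v y -> eventually_runs f v y) ->
  eval (PMu f) v m -> eventually_runs (PMu f) v m.
Proof.
move=> IHf /eval_mu_inv [H0 Hlt].
have [N0 HN0] := IHf _ _ H0.
have [N1 HN1] : exists N, forall n, N <= n -> forall i, i < m -> 1 < run f n (i :: v).
  elim: m Hlt {H0 HN0} => [|m IH] Hlt; first by exists 0.
  have [i lt|N HN] := IH; first by apply: Hlt; apply: ltnW.
  have [k /IHf [N' HN']] := Hlt m (ltnSn m).
  exists (maxn N N') => n; rewrite geq_max => /andP [l1 l2] i.
  rewrite ltnS leq_eqVlt => /orP [/eqP -> | lt]; last exact: HN.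
  by rewrite HN'.
exists (maxn (maxn N0 N1) m.+1) => n.
rewrite !geq_max => /andP [/andP [l0 l1] l2] /=.
by rewrite (mu_search_found (HN1 _ l1) (HN0 _ l0) l2).
Qed.

Lemma run_complete p v y : eval p v y -> eventually_runs p v y.
Proof.
elim/prog_nested_ind: p v y.
- by move=> v y /eval_zero_inv ->; exists 0.
- by move=> v y /eval_succ_inv [x [v' [-> ->]]]; exists 0.
- by move=> i v y /eval_proj_inv ->; exists 0.
- move=> f gs IHf IHgs v y /eval_comp_inv [ws [Hws Hf]].
  have [N1 HN1] := eventually_runs_map IHgs Hws.
  have [N2 HN2] := IHf _ _ Hf.
  exists (maxn N1 N2) => n; rewrite geq_max => /andP [l1 l2] /=.
  rewrite HN1 // all_map; under eq_all do rewrite /= ltnS leq0n.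
  by rewrite all_predT -map_comp map_id_in ?HN2.
- move=> f g IHf IHg [|k v] y; first by move/eval_prim_nil.
  elim: k y => [|k IH] y.
    by move/eval_prim0_inv/IHf => [N HN]; exists N => n /= /HN ->.
  case/eval_primS_inv => [r [Hr Hg]].
  have [N1 H1] := IH _ Hr; have [N2 H2] := IHg _ _ Hg.
  exists (maxn N1 N2) => n; rewrite geq_max => /andP [l1 l2] /=.
  by have /= -> := H1 _ l1; rewrite H2.
- by move=> f IHf v m; apply: eventually_runs_mu.
Qed.

Definition proj_range (s m : nat) : seq prog := [seq PProj i | i <- iota s m].

Fixpoint prod_prog (cs : seq prog) : prog :=
  if cs is c :: cs' then PComp mul_prog [:: c; prod_prog cs'] else const_prog 1.

Definition prim_step_prog (L : nat) (cg : prog) : prog :=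
  PComp ifnz_prog
    [:: PProj 1;
        PComp cg (PProj 2 :: PProj 0 :: PComp pred_prog [:: PProj 1] :: proj_range 3 L);
        PZero].

Definition mu_step_prog (L : nat) (cf : prog) : prog :=
  let r := PComp cf (PProj 2 :: PProj 0 :: proj_range 3 L) in
  PComp ifnz_prog
    [:: PProj 1; PProj 1;
        PComp ifnz_prog
          [:: r;
              PComp ifnz_prog [:: PComp pred_prog [:: r]; PZero;
                                  PComp PSucc [:: PComp PSucc [:: PProj 0]]];
              const_prog 1]].

(* [clocked L p] computes [run p] without minimisation; its first argument is
   the clock, followed by the [L] arguments of [p]. *)
Fixpoint clocked (L : nat) (p : prog) : prog :=
  match p with
  | PZero => PComp PSucc [:: PZero]
  | PSucc =>
      if L is 0 then PZero else PComp PSucc [:: PComp PSucc [:: PProj 1]]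
  | PProj i => PComp PSucc [:: PProj i.+1]
  | PComp f gs =>
      PComp ifnz_prog
        [:: prod_prog (map (clocked L) gs);
            PComp (clocked (size gs) f)
              (PProj 0 :: map (fun g => PComp pred_prog [:: clocked L g]) gs);
            PZero]
  | PPrim f g =>
      if L is L'.+1 then
        PComp (PPrim (clocked L' f) (prim_step_prog L' (clocked L'.+2 g)))
          (PProj 1 :: PProj 0 :: proj_range 2 L')
      else PZero
  | PMu f =>
      PComp pred_prog
        [:: PComp (PPrim PZero (mu_step_prog L (clocked L.+1 f)))
              (PProj 0 :: PProj 0 :: proj_range 1 L)]
  end.

Definition clocked_correct (p : prog) : Prop :=
  forall L n v, size v = L -> eval (clocked L p) (n :: v) (run p n v).

Lemma evals_proj_range w s u : size u = s -> evals (proj_range s (size w)) (u ++ w) w.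
Proof.
elim: w s u => [|x w IH] s u Hu /=; first by constructor.
constructor; first by apply: eval_projE; rewrite nth_cat Hu ltnn subnn.
by rewrite -cat_rcons; apply: IH; rewrite size_rcons Hu.
Qed.

Lemma eval_prod cs w rs : evals cs w rs -> eval (prod_prog cs) w (foldr muln 1 rs).
Proof.
elim: cs rs => [|c cs IH] rs /=; first by move/evals_nil_inv ->; exact: (eval_const 1).
case/evals_cons_inv => [y [ys [-> Hy Hys]]] /=.
exact: eval_comp2 Hy (IH _ Hys) (eval_mul _ _ _).
Qed.

Lemma clocked_correct_comp f gs : clocked_correct f ->
  foldr (fun g acc => clocked_correct g /\ acc) True gs ->
  clocked_correct (PComp f gs).
Proof.
move=> IHf IHgs L n v Hv /=.
set rs := map (fun g => run g n v) gs.
have Ers : evals (map (clocked L) gs) (n :: v) rs.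
  elim: gs IHgs @rs {IHf} => [|g gs IH] /= IHgs; first by constructor.
  by constructor; [apply: IHgs.1 | apply: IH; case: IHgs].
have Epred : evals (PProj 0 :: map (fun g => PComp pred_prog [:: clocked L g]) gs)
               (n :: v) (n :: map predn rs).
  constructor; first exact: eval_projE.
  elim: gs IHgs @rs {IHf Ers} => [|g gs IH] /= IHgs; first by constructor.
  constructor; last by apply: IH; case: IHgs.
  by apply: eval_comp1; [apply: IHgs.1 | apply: eval_pred].
apply: eval_comp3 (eval_prod Ers) _ (ev_zero _) _.
  by apply: ev_comp Epred (IHf _ _ _ _); rewrite !size_map.
have prod_gt0 : (0 < foldr muln 1 rs) = all (fun r => 0 < r) rs.
  by elim: (rs) => //= r rs' <-; rewrite muln_gt0.
apply: eval_eq_result; first exact: eval_ifnz.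
by rewrite -prod_gt0; case: (foldr muln 1 _).
Qed.

Lemma clocked_correct_prim f g :
  clocked_correct f -> clocked_correct g -> clocked_correct (PPrim f g).
Proof.
move=> IHf IHg [|L'] n v /=; first by case: v => // _; constructor.
case: v => // k v' [Hv'].
apply: (ev_comp (ws := k :: n :: v')).
  do 2!(constructor; first exact: eval_projE).
  by rewrite -Hv'; apply: (evals_proj_range v' (u := [:: n; k])).
elim: k => [|k IH] /=; first by constructor; apply: IHf.
apply: ev_primS IH _.
apply: eval_comp3; [exact: eval_projE | | exact: ev_zero | ].
  apply: (ev_comp (ws := [:: n, k, _ & v'])); last by apply: IHg; rewrite /= Hv'.
  do 2!(constructor; first exact: eval_projE).
  constructor; first by apply: eval_comp1; [apply: eval_projE | apply: eval_pred].
  by rewrite -Hv'; apply: (evals_proj_range v' (u := [:: k; _; n])).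
apply: eval_eq_result; first exact: eval_ifnz.
by case: (prim_run _ _ k).
Qed.

Lemma clocked_correct_mu f : clocked_correct f -> clocked_correct (PMu f).
Proof.
move=> IHf L n v Hv /=.
apply: eval_comp1 _ (eval_pred _ _).
apply: (ev_comp (ws := n :: n :: v)).
  do 2!(constructor; first exact: eval_projE).
  by rewrite -Hv; apply: (evals_proj_range v (u := [:: n])).
move: {1 4}n => m.
elim: m => [|m IH] /=; first by do 2!constructor.
apply: ev_primS IH _.
set s := mu_search _ m.
have Hr : eval (PComp (clocked L.+1 f) (PProj 2 :: PProj 0 :: proj_range 3 L))
            [:: m, s, n & v] (run f n (m :: v)).
  apply: ev_comp; last by apply: IHf; rewrite /= Hv.
  do 2!(constructor; first exact: eval_projE).
  by rewrite -Hv; apply: (evals_proj_range v (u := [:: m; s; n])).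
apply: eval_comp3; [exact: eval_projE | exact: eval_projE | | ].
  apply: eval_comp3; [exact: Hr | | exact: (eval_const 1) | exact: eval_ifnz].
  apply: eval_comp3; [exact: eval_comp1 Hr (eval_pred _ _) | exact: ev_zero | |
                      exact: eval_ifnz].
  apply: eval_comp1; last by constructor.
  by apply: eval_comp1; [exact: eval_projE | constructor].
apply: eval_eq_result; first exact: eval_ifnz.
by clear Hr; case: s => //=; case: (run f n (m :: v)) => [|[|r]].
Qed.

Lemma eval_clocked p : clocked_correct p.
Proof.
elim/prog_nested_ind: p.
- by move=> L n v _; apply: eval_comp1; constructor.
- move=> [|L] n [|x v] //= _; first by constructor.
  apply: eval_comp1; last by constructor.
  by apply: eval_comp1; [exact: eval_projE | constructor].
- by move=> i L n v _; apply: eval_comp1; [apply: eval_projE | constructor].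
- exact: clocked_correct_comp.
- exact: clocked_correct_prim.
- exact: clocked_correct_mu.
Qed.

Fixpoint tri (s : nat) : nat := if s is s'.+1 then tri s' + s'.+1 else 0.

Lemma triE s : tri s = (s * s.+1) %/ 2.
Proof.
suff E : tri s * 2 = s * s.+1 by rewrite -E mulnK.
by elim: s => //= s IH; rewrite mulnDl IH; lia.
Qed.

Definition tri_prog :=
  PPrim PZero (PComp add_prog [:: PProj 1; PComp PSucc [:: PProj 0]]).

Lemma eval_tri s v : eval tri_prog (s :: v) (tri s).
Proof.
have Hg j r w : eval (PComp add_prog [:: PProj 1; PComp PSucc [:: PProj 0]])
                  (j :: r :: w) (r + j.+1).
  apply: eval_comp2; [exact: eval_projE | | exact: eval_add].
  by apply: eval_comp1; [exact: eval_projE | constructor].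
apply: eval_eq_result (eval_prim_rect (F := fun _ => 0) (@ev_zero) Hg s v) _.
by elim: s => //= s ->.
Qed.

Definition npair_prog :=
  PComp add_prog [:: PComp tri_prog [:: PComp add_prog [:: PProj 0; PProj 1]]; PProj 1].

Lemma eval_npair x y v : eval npair_prog (x :: y :: v) (npair x y).
Proof.
apply: (@eval_eq_result _ _ (tri (x + y) + y)); last by rewrite /npair triE.
apply: eval_comp2; [ | exact: eval_projE | exact: eval_add].
apply: eval_comp1 _ (eval_tri _ _).
by apply: eval_comp2; [exact: eval_projE | exact: eval_projE | exact: eval_add].
Qed.

Definition const_code_prog :=
  PPrim (const_prog (npair 0 0))
    (PComp npair_prog
       [:: const_prog 3;
           PComp npair_prog
             [:: const_prog (npair 1 0);
                 PComp PSucc [:: PComp npair_prog [:: PProj 1; PZero]]]]).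

Lemma eval_const_code k v : eval const_code_prog (k :: v) (pcode (const_prog k)).
Proof.
elim: k => [|k IH]; first by constructor; apply: eval_const.
apply: ev_primS IH _.
apply: eval_comp2; [exact: eval_const | | exact: eval_npair].
apply: eval_comp2; [exact: eval_const | | exact: eval_npair].
apply: eval_comp1; last by constructor.
by apply: eval_comp2; [exact: eval_projE | constructor | exact: eval_npair].
Qed.

Inductive code_exp : Type :=
  | CVar
  | CNat of nat
  | CPair of code_exp & code_exp
  | CSucc of code_exp
  | CConstCode of code_exp.

Fixpoint code_eval (x : nat) (e : code_exp) : nat :=
  match e with
  | CVar => x
  | CNat k => k
  | CPair e1 e2 => npair (code_eval x e1) (code_eval x e2)
  | CSucc e1 => (code_eval x e1).+1
  | CConstCode e1 => pcode (const_prog (code_eval x e1))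
  end.

Fixpoint code_prog (e : code_exp) : prog :=
  match e with
  | CVar => PProj 0
  | CNat k => const_prog k
  | CPair e1 e2 => PComp npair_prog [:: code_prog e1; code_prog e2]
  | CSucc e1 => PComp PSucc [:: code_prog e1]
  | CConstCode e1 => PComp const_code_prog [:: code_prog e1]
  end.

Lemma eval_code_prog e x w : eval (code_prog e) (x :: w) (code_eval x e).
Proof.
elim: e => /= [|k|e1 IH1 e2 IH2|e1 IH1|e1 IH1].
- exact: eval_projE.
- exact: eval_const.
- exact: eval_comp2 IH1 IH2 (eval_npair _ _ _).
- by apply: eval_comp1 IH1 _; constructor.
- exact: eval_comp1 IH1 (eval_const_code _ _).
Qed.

Fixpoint code_list (l : seq code_exp) : code_exp :=
  if l is e :: l' then CSucc (CPair e (code_list l')) else CNat 0.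

Lemma code_eval_list x l : code_eval x (code_list l) = enc_list (map (code_eval x) l).
Proof. by elim: l => //= e l ->. Qed.

(** * Weighted tree automata over a monadic alphabet *)

HB.instance Definition _ (B : strong_bimonoid) :=
  Monoid.isComLaw.Build (sb_car B) (sb_zero B) (@sb_add B)
    (@sb_addA B) (@sb_addC B) (@sb_add0r B).

Definition sb_of_bool (B : strong_bimonoid) (b : bool) : B :=
  if b then sb_one B else sb_zero B.

Definition monadic : ranked_alphabet :=
  @RankedAlphabet bool (fun b : bool => if b then 1 else 0).

Definition chain (n : nat) : tree (sym monadic) :=
  iter n (fun t => Node (true : sym monadic) [:: t]) (Node (false : sym monadic) [::]).

Lemma well_ranked_chainP (xi : tree (sym monadic)) :
  well_ranked xi -> exists n, xi = chain n.
Proof.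
move: xi; fix IH 1; move=> [[] [|t [|t' ch]]] //=.
- by rewrite andbT => /IH [n ->]; exists n.+1.
- by exists 0.
Qed.

Lemma chain_well_ranked n : well_ranked (chain n).
Proof. by elim: n => //= n ->. Qed.

Lemma tuple1E (T : Type) (t : 1.-tuple T) : t = [tuple tnth t ord0].
Proof. by apply: eq_from_tnth => i; rewrite (ord1 i). Qed.

Section MonadicRuns.
Variables (B : strong_bimonoid) (Q : finType) (A : wta monadic B Q).

Lemma hV_chain0 q : hV A (chain 0) q = delta A (false : sym monadic) [tuple] q.
Proof.
rewrite /= (big_only1 [tuple]) // ?big_ord0 ?sb_mul1r // => t.
by rewrite tuple0 eqxx.
Qed.

Lemma hV_chainS n q :
  hV A (chain n.+1) q =
  \big[@sb_add B/sb_zero B]_(t : 1.-tuple Q)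
     sb_mul (hV A (chain n) (tnth t ord0)) (delta A (true : sym monadic) t q).
Proof. by apply: eq_bigr => t _; rewrite big_ord_recl big_ord0 sb_mulr1. Qed.

Lemma hV_chainS_indicator n r q :
  (forall q', hV A (chain n) q' = sb_of_bool B (q' == r)) ->
  hV A (chain n.+1) q = delta A (true : sym monadic) [tuple r] q.
Proof.
move=> Hn; rewrite hV_chainS (big_only1 [tuple r]) //=.
  by rewrite Hn (eqxx r) sb_mul1r.
move=> t Ht _; rewrite Hn /sb_of_bool; case: eqP => [E|_]; last by rewrite sb_mul0r.
by case/negP: Ht; apply/eqP; rewrite (tuple1E t) E.
Qed.

Lemma sem_init_indicator xi r :
  (forall q, hV A xi q = sb_of_bool B (q == r)) -> sem_init A xi = final A r.
Proof.
move=> H; rewrite /sem_init (big_only1 r) // ?H ?eqxx ?sb_mul1r //.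
by move=> q /negbTE Hq _; rewrite H Hq sb_mul0r.
Qed.

Lemma hV_chain_crisp : crisp_deterministic A ->
  forall n, exists r, forall q, hV A (chain n) q = sb_of_bool B (q == r).
Proof.
move=> Hc; elim=> [|n [r IH]].
  have [r [H1 H2]] := Hc (false : sym monadic) [tuple]; exists r => q.
  by rewrite hV_chain0 /sb_of_bool; case: (eqVneq q r) => [->|/eqP/H2].
have [r' [H1 H2]] := Hc (true : sym monadic) [tuple r]; exists r' => q.
by rewrite (hV_chainS_indicator _ IH) /sb_of_bool; case: (eqVneq q r') => [->|/eqP/H2].
Qed.

Lemma sem_init_chain_crisp : crisp_deterministic A ->
  forall n, exists r, sem_init A (chain n) = final A r.
Proof.
by move=> Hc n; have [r Hr] := hV_chain_crisp Hc n; exists r; apply: sem_init_indicator.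
Qed.

Lemma hV_chain_iter (r0 : Q) (next : Q -> Q) :
  (forall t q, delta A (false : sym monadic) t q = sb_of_bool B (q == r0)) ->
  (forall t q,
     delta A (true : sym monadic) t q = sb_of_bool B (q == next (tnth t ord0))) ->
  forall n q, hV A (chain n) q = sb_of_bool B (q == iter n next r0).
Proof.
move=> H0 H1; elim=> [|n IH] q; first by rewrite hV_chain0 H0.
by rewrite (hV_chainS_indicator _ IH) H1.
Qed.

End MonadicRuns.

(** * Truncated arctic bimonoids *)

Definition trunc (K : option nat) (s : nat) : nat :=
  if K is Some T then minn s T.+1 else s.

(* The carrier of [arctic K] is a set of naturals: [0] stands for the
   arctic zero and [n.+1] for the exponent [n]; exponents are truncated at
   [T.+1] when [K = Some T]. *)
Definition arctic_mem (K : option nat) (x : nat) : bool :=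
  (x == 0) || (trunc K x.-1 == x.-1).

Definition arctic_mul (K : option nat) (x y : nat) : nat :=
  if (x == 0) || (y == 0) then 0 else (trunc K (x.-1 + y.-1)).+1.

Lemma truncK K s : trunc K (trunc K s) = trunc K s.
Proof. by case: K => //= T; lia. Qed.

Lemma trunc_le K s : trunc K s <= s.
Proof. by case: K => //= T; lia. Qed.

Lemma trunc_truncS K n : trunc K (trunc K n).+1 = trunc K n.+1.
Proof. by case: K => [T|] //=; lia. Qed.

Lemma arctic_mem_max K x y :
  arctic_mem K x -> arctic_mem K y -> arctic_mem K (maxn x y).
Proof. by move=> Hx Hy; case: (leqP x y). Qed.

Lemma arctic_mem_mul K x y : arctic_mem K (arctic_mul K x y).
Proof. by rewrite /arctic_mul /arctic_mem; case: ifP => //= _; rewrite truncK. Qed.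

Lemma arctic_mulA K x y z :
  arctic_mul K x (arctic_mul K y z) = arctic_mul K (arctic_mul K x y) z.
Proof.
rewrite /arctic_mul; case: x => [|x] //=; case: y => [|y] //=; case: z => [|z] //=.
by congr S; case: K => [T|] /=; lia.
Qed.

Lemma arctic_mem_small K x : x <= 2 -> arctic_mem K x.
Proof.
case: x => [|[|[|x]]] // _; rewrite /arctic_mem /=; case: K => // T.
by apply/eqP; rewrite /trunc; lia.
Qed.

Section Arctic.
Variable K : option nat.

Definition arctic_car := {x : nat | arctic_mem K x}.

Definition arctic_add (x y : arctic_car) : arctic_car :=
  exist _ (maxn (val x) (val y)) (arctic_mem_max (valP x) (valP y)).
Definition arctic_times (x y : arctic_car) : arctic_car :=
  exist _ (arctic_mul K (val x) (val y)) (arctic_mem_mul K _ _).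
Definition arctic_zero : arctic_car := exist _ 0 (arctic_mem_small K (isT : 0 <= 2)).
Definition arctic_one : arctic_car := exist _ 1 (arctic_mem_small K (isT : 1 <= 2)).
Definition arctic_gen : arctic_car := exist _ 2 (arctic_mem_small K (isT : 2 <= 2)).

Lemma arctic_addA x y z : arctic_add x (arctic_add y z) = arctic_add (arctic_add x y) z.
Proof. by apply: val_inj; rewrite /= maxnA. Qed.

Lemma arctic_addC x y : arctic_add x y = arctic_add y x.
Proof. by apply: val_inj; rewrite /= maxnC. Qed.

Lemma arctic_add0 x : arctic_add arctic_zero x = x.
Proof. by apply: val_inj; rewrite /= max0n. Qed.

Lemma arctic_timesA x y z :
  arctic_times x (arctic_times y z) = arctic_times (arctic_times x y) z.
Proof. by apply: val_inj; rewrite /= arctic_mulA. Qed.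

Lemma arctic_mem_pred x : arctic_mem K x.+1 -> trunc K x = x.
Proof. by move/eqP. Qed.

Lemma arctic_mul1 x : arctic_times arctic_one x = x.
Proof.
case: x => [[|x] /= Hx]; apply: val_inj => //=.
by rewrite /arctic_mul /= arctic_mem_pred.
Qed.

Lemma arctic_mulr1 x : arctic_times x arctic_one = x.
Proof.
case: x => [[|x] /= Hx]; apply: val_inj => //=.
by rewrite /arctic_mul /= addn0 arctic_mem_pred.
Qed.

Lemma arctic_mul0 x : arctic_times arctic_zero x = arctic_zero.
Proof. exact: val_inj. Qed.

Lemma arctic_mulr0 x : arctic_times x arctic_zero = arctic_zero.
Proof. by apply: val_inj; rewrite /= /arctic_mul orbT. Qed.

Lemma arctic_zero_neq_one : arctic_zero <> arctic_one.
Proof. by move/(congr1 val). Qed.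

Definition arctic : strong_bimonoid :=
  StrongBimonoid arctic_addA arctic_addC arctic_add0 arctic_timesA
    arctic_mul1 arctic_mulr1 arctic_mul0 arctic_mulr0 arctic_zero_neq_one.

End Arctic.

Definition height_wta (K : option nat) : wta monadic (arctic K) unit :=
  @Wta monadic (arctic K) unit
    (fun (s : sym monadic) _ _ => if s then arctic_gen K else arctic_one K)
    (fun _ => arctic_one K).

Lemma hV_height_wta K n : val (hV (height_wta K) (chain n) tt) = (trunc K n).+1.
Proof.
elim: n => [|n IH]; first by rewrite hV_chain0 /=; case: K.
rewrite hV_chainS (big_only1 [tuple tt]) //; last first.
  by move=> t; rewrite (tuple1E t); case: (tnth t ord0) => /eqP.
by rewrite /= IH /arctic_mul /= addn1 trunc_truncS.
Qed.

Lemma sem_height_wta K n : val (sem_init (height_wta K) (chain n)) = (trunc K n).+1.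
Proof.
rewrite /sem_init (big_only1 tt) //= /arctic_mul /= addn0.
by rewrite -/(val _) hV_height_wta truncK.
Qed.

Section BoundedHeight.
Variable T : nat.

Definition height_succ (i : 'I_T.+2) : 'I_T.+2 := inord (minn i.+1 T.+1).

Definition bounded_height_delta (s : sym monadic) :
    (rank s).-tuple 'I_T.+2 -> 'I_T.+2 -> arctic (Some T) :=
  match s with
  | true => fun t q => sb_of_bool _ (q == height_succ (tnth t ord0))
  | false => fun _ q => sb_of_bool _ (q == ord0)
  end.

Definition bounded_height_wta : wta monadic (arctic (Some T)) 'I_T.+2 :=
  @Wta monadic (arctic (Some T)) _ bounded_height_delta
    (fun q => insubd (arctic_zero _) (val q).+1).

Lemma iter_height_succ n : val (iter n height_succ ord0) = minn n T.+1.
Proof. by elim: n => [|n IH] /=; rewrite ?min0n // inordK IH; lia. Qed.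

Lemma bounded_height_wta_crisp : crisp_deterministic bounded_height_wta.
Proof.
have indicator_crisp (r : 'I_T.+2) :
    exists q, sb_of_bool (arctic (Some T)) (q == r) = sb_one _ /\
      forall q', q' <> q -> sb_of_bool (arctic (Some T)) (q' == r) = sb_zero _.
  by exists r; split=> [|q' /eqP /negbTE ->]; rewrite ?eqxx.
by case=> t; apply: indicator_crisp.
Qed.

Lemma has_crisp_height_bounded : has_crisp_equivalent (height_wta (Some T)).
Proof.
exists _, bounded_height_wta; split; first by rewrite card_ord.
split; first exact: bounded_height_wta_crisp.
move=> xi /well_ranked_chainP [n ->].
rewrite (@sem_init_indicator _ _ _ _ (iter n height_succ ord0));
  last exact: hV_chain_iter.
apply: val_inj; rewrite sem_height_wta /= val_insubd iter_height_succ /arctic_mem /=.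
by rewrite ifT //; apply/eqP; rewrite /trunc; lia.
Qed.

End BoundedHeight.

Lemma no_crisp_height_unbounded : ~ has_crisp_equivalent (height_wta None).
Proof.
move=> [Q' [A' [_ [Hc Heq]]]].
pose f (n : nat) : Q' :=
  proj1_sig (constructive_indefinite_description _ (sem_init_chain_crisp Hc n)).
have Hf n : sem_init A' (chain n) = final A' (f n).
  by rewrite /f; case: constructive_indefinite_description.
have f_inj (i j : 'I_#|Q'|.+1) : f i = f j -> i = j.
  move=> Eij; apply: val_inj.
  have := congr1 val (Heq _ (chain_well_ranked i)).
  have := congr1 val (Heq _ (chain_well_ranked j)).
  by rewrite !Hf Eij !sem_height_wta => -> [].
by have := leq_card _ f_inj; rewrite card_ord ltnn.
Qed.

(** * Truncating at the halting time of a decider *)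

Definition count_until (h : nat -> nat) : nat -> nat :=
  fix go k :=
    if k is j.+1 then
      if j - go j is 0 then (if h j == 1 then go j else (go j).+1) else go j
    else 0.

Definition trunc_until (h : nat -> nat) (s : nat) : nat :=
  if s is s'.+1 then (count_until h s').+1 else 0.

Lemma count_until_never h : (forall j, h j != 1) -> forall k, count_until h k = k.
Proof. by move=> H; elim=> //= k ->; rewrite subnn (negbTE (H k)). Qed.

Lemma count_until_first h T : (forall j, j < T -> h j != 1) -> h T = 1 ->
  forall k, count_until h k = minn k T.
Proof.
move=> H HT; elim=> [|k IH] /=; first by rewrite min0n.
rewrite IH; have [lt|gt|->] := ltngtP k T.
- by rewrite subnn (negbTE (H k lt)); lia.
- have -> : k - T = (k - T).-1.+1 by lia.
  lia.
- by rewrite subnn HT eqxx; lia.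
Qed.

Definition decider_clock (d : prog) (c : nat) (j : nat) : nat := run d j [:: c].

Lemma trunc_until_decider d c :
  (exists2 T, run d T [:: c] = 1 &
     forall s, trunc_until (decider_clock d c) s = trunc (Some T) s) \/
  ((forall n, run d n [:: c] <> 1) /\
     forall s, trunc_until (decider_clock d c) s = trunc None s).
Proof.
have [Hhalt|Hnever] := classic (exists T, run d T [:: c] == 1); last first.
  right; split=> [n /eqP Hn|]; first by apply: Hnever; exists n.
  case=> [|s] //=; rewrite count_until_never // => j; apply/negP => Hj.
  by apply: Hnever; exists j.
left; case: (ex_minnP Hhalt) => T /eqP HT Hmin.
exists T => // -[|s] //=.
have Hbefore j : j < T -> decider_clock d c j != 1.
  by move=> lt; apply/negP => /Hmin; rewrite leqNgt lt.
by rewrite (count_until_first Hbefore HT); lia.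
Qed.

Section DeciderCores.
Variable d : prog.

Definition decider_run_prog := PComp (clocked 1 d) [:: PProj 0; PProj 2].

Definition count_step_prog :=
  PComp ifnz_prog
    [:: PComp sub_prog [:: PProj 1; PProj 0]; PProj 1;
        PComp ifnz_prog
          [:: PComp pred_prog [:: decider_run_prog]; PComp PSucc [:: PProj 1];
              PComp ifnz_prog [:: decider_run_prog; PProj 1; PComp PSucc [:: PProj 1]]]].

Definition count_prog := PPrim PZero count_step_prog.

Definition trunc_prog :=
  PComp ifnz_prog
    [:: PProj 0;
        PComp PSucc [:: PComp count_prog [:: PComp pred_prog [:: PProj 0]; PProj 1]];
        PZero].

(* The cores take the instance code [c] first, then the codes of the
   arguments of the bimonoid operation. *)
Definition mem_core :=
  PComp ifnz_prog
    [:: PProj 1;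
        PComp eq0_prog
          [:: PComp sub_prog
                [:: PComp trunc_prog [:: PComp pred_prog [:: PProj 1]; PProj 0];
                    PComp pred_prog [:: PProj 1]]];
        const_prog 1].

Definition add_core := PComp add_prog [:: PProj 1; PComp sub_prog [:: PProj 1; PProj 2]].

Definition mul_core :=
  PComp ifnz_prog
    [:: PProj 1;
        PComp ifnz_prog
          [:: PProj 2;
              PComp PSucc
                [:: PComp trunc_prog
                      [:: PComp pred_prog
                            [:: PComp pred_prog [:: PComp add_prog [:: PProj 1; PProj 2]]];
                          PProj 0]];
              PZero];
        PZero].

Lemma eval_count k c w :
  eval count_prog (k :: c :: w) (count_until (decider_clock d c) k).
Proof.
elim: k => [|k IH] /=; first by do 2!constructor.
apply: ev_primS IH _.
set r := count_until _ k.
have Hrun : eval decider_run_prog [:: k, r, c & w] (run d k [:: c]).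
  by apply: eval_comp2; [exact: eval_projE | exact: eval_projE | exact: eval_clocked].
apply: eval_comp3; [ | exact: eval_projE | | ].
- by apply: eval_comp2; [exact: eval_projE | exact: eval_projE | exact: eval_sub].
- apply: eval_comp3; [exact: eval_comp1 Hrun (eval_pred _ _) | | | exact: eval_ifnz].
    by apply: eval_comp1; [exact: eval_projE | constructor].
  apply: eval_comp3; [exact: Hrun | exact: eval_projE | | exact: eval_ifnz].
  by apply: eval_comp1; [exact: eval_projE | constructor].
apply: eval_eq_result; first exact: eval_ifnz.
rewrite /decider_clock; case: (k - r) => //=.
by case: (run d k [:: c]) => [|[|x]].
Qed.

Lemma eval_trunc s c w :
  eval trunc_prog (s :: c :: w) (trunc_until (decider_clock d c) s).
Proof.
apply: eval_comp3; [exact: eval_projE | | exact: ev_zero | ].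
  apply: eval_comp1; last by constructor.
  apply: eval_comp2; [ | exact: eval_projE | exact: eval_count].
  by apply: eval_comp1; [exact: eval_projE | exact: eval_pred].
by apply: eval_eq_result; [exact: eval_ifnz | case: s].
Qed.

Lemma eval_mem_core c x w : eval mem_core [:: c, x & w]
  (if x is 0 then 1 else x.-1 - trunc_until (decider_clock d c) x.-1 == 0).
Proof.
apply: eval_comp3; [exact: eval_projE | | exact: eval_const | ].
  apply: eval_comp1; last exact: eval_eq0.
  apply: eval_comp2; last exact: eval_sub.
    apply: eval_comp2; [ | exact: eval_projE | exact: eval_trunc].
    by apply: eval_comp1; [exact: eval_projE | exact: eval_pred].
  by apply: eval_comp1; [exact: eval_projE | exact: eval_pred].
by apply: eval_eq_result; [exact: eval_ifnz | case: x].
Qed.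

Lemma eval_add_core c x y w : eval add_core [:: c, x, y & w] (maxn x y).
Proof.
apply: eval_comp2; [exact: eval_projE | | ].
  by apply: eval_comp2; [exact: eval_projE | exact: eval_projE | exact: eval_sub].
by apply: eval_eq_result; [exact: eval_add | rewrite maxnE].
Qed.

Lemma eval_mul_core c x y w : eval mul_core [:: c, x, y & w]
  (if (x == 0) || (y == 0) then 0
   else (trunc_until (decider_clock d c) (x + y).-2).+1).
Proof.
pose z s := (trunc_until (decider_clock d c) s.-2).+1.
apply: (@eval_eq_result _ _ (if x is 0 then 0 else if y is 0 then 0 else z (x + y)));
  last by case: x; case: y.
apply: eval_comp3; [exact: eval_projE | | exact: ev_zero | ]; last first.
  by apply: eval_eq_result; [exact: eval_ifnz | case: x].
apply: eval_comp3; [exact: eval_projE | | exact: ev_zero | ]; last first.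
  by apply: eval_eq_result; [exact: eval_ifnz | case: y].
apply: eval_comp1; last by constructor.
apply: eval_comp2; [ | exact: eval_projE | exact: eval_trunc].
apply: eval_comp1 _ (eval_pred _ _); apply: eval_comp1 _ (eval_pred _ _).
by apply: eval_comp2; [exact: eval_projE | exact: eval_projE | exact: eval_add].
Qed.

End DeciderCores.

(** * A self-referential instance *)

Definition fix_first (core g : prog) : prog := PComp core [:: g; PProj 0; PProj 1].

Definition diag (E : prog) : prog := PComp E [:: const_prog (pcode E)].

Definition fix_first_diag_exp (core : nat) : code_exp :=
  CPair (CNat 3)
    (CPair (CNat core)
       (code_list [:: CPair (CNat 3) (CPair CVar (code_list [:: CConstCode CVar]));
                      CNat (pcode (PProj 0)); CNat (pcode (PProj 1))])).

Lemma code_eval_fix_first_diag E core :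
  code_eval (pcode E) (fix_first_diag_exp (pcode core)) = pcode (fix_first core (diag E)).
Proof. by []. Qed.

Definition height_table : seq (nat * seq nat * nat * nat) :=
  [:: (0, [::], 0, 1); (1, [:: 0], 0, 2)].

Definition height_instance_code (pB pA pM : prog) : nat :=
  instance_code [:: 0; 1] pB pA pM 0 1 height_table [:: 1].

Section SelfReference.
Variable d : prog.

(* On the code of any [E], [self_prog] outputs the instance code whose
   programs run the cores on the output of [diag E]; for [E := self_prog]
   that output is the instance code itself (Kleene's recursion theorem). *)
Definition self_prog : prog :=
  code_prog (code_list
    [:: CNat (enc_list [:: 0; 1]);
        fix_first_diag_exp (pcode (mem_core d));
        fix_first_diag_exp (pcode add_core);
        fix_first_diag_exp (pcode (mul_core d));
        CNat 0; CNat 1; CNat (enc_list (map entry_code height_table));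
        CNat (enc_list [:: 1])]).

Definition self_mem := fix_first (mem_core d) (diag self_prog).
Definition self_add := fix_first add_core (diag self_prog).
Definition self_mul := fix_first (mul_core d) (diag self_prog).
Definition self_code := height_instance_code self_mem self_add self_mul.

Lemma eval_diag_self w : eval (diag self_prog) w self_code.
Proof.
apply: eval_comp1 (eval_const _ _) _.
apply: eval_eq_result (eval_code_prog _ _ [::]) _.
rewrite code_eval_list /self_code /height_instance_code /instance_code.
by rewrite /self_mem /self_add /self_mul -!code_eval_fix_first_diag.
Qed.

Lemma eval_fix_first_self core v y :
  eval core [:: self_code; nth 0 v 0; nth 0 v 1] y ->
  eval (fix_first core (diag self_prog)) v y.
Proof. exact: eval_comp3 (eval_diag_self _) (ev_proj 0 v) (ev_proj 1 v). Qed.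

Variable K : option nat.
Hypothesis trunc_self : forall s, trunc_until (decider_clock d self_code) s = trunc K s.

Lemma presents_self : presents (B := arctic K) val self_mem self_add self_mul.
Proof.
have Hmem x : eval self_mem [:: x] (arctic_mem K x).
  apply: eval_fix_first_self.
  apply: eval_eq_result (eval_mem_core _ _ _ _) _; rewrite trunc_self.
  by case: x => // x; rewrite /arctic_mem /= subn_eq0 eqn_leq trunc_le.
split; first exact: val_inj.
split; first by move=> x [b <-]; have := Hmem (val b); rewrite (valP b).
split.
  move=> x Hx; have := Hmem x; case E: (arctic_mem K x) => //.
  by case: (Hx (exist _ x E)).
split; first by move=> a b; apply/eval_fix_first_self/eval_add_core.
move=> a b; apply/eval_fix_first_self.
apply: eval_eq_result (eval_mul_core _ _ _ _ _) _.
rewrite trunc_self /= /arctic_mul.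
by case: (val a) => [|x] //; case: (val b) => [|y] //=; rewrite addnS.
Qed.

Lemma describes_self : describes self_code (height_wta K) val self_mem self_add self_mul.
Proof.
exists (fun s : bool => nat_of_bool s), (fun _ : unit => 0).
exists [:: 0; 1], height_table, [:: 1].
split; first by split; [case=> [] [] | case | rewrite card_bool].
split; first by split; [case=> [] [] | case | rewrite card_unit].
split; first by case.
split; first by case.
split=> // e; split.
  rewrite !inE => /orP [/eqP -> | /eqP ->].
    by exists (false : sym monadic), [tuple], tt.
  by exists (true : sym monadic), [tuple tt], tt.
move=> [[] [t [[] ->]]].
  by rewrite (tuple1E t); case: (tnth t ord0); rewrite /= !inE eqxx orbT.
by rewrite (tuple0 t) /= !inE eqxx.
Qed.

End SelfReference.

Theorem theorem8p5 : ~ exists d : prog, decides_crisp_determinizability d.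
Proof.
move=> [d Hd].
have decide K :
    (forall s, trunc_until (decider_clock d (self_code d)) s = trunc K s) ->
    (has_crisp_equivalent (height_wta K) -> eval d [:: self_code d] 1) /\
    (~ has_crisp_equivalent (height_wta K) -> eval d [:: self_code d] 0).
  move=> Htrunc; apply: Hd (presents_self Htrunc) _ (describes_self d K).
  - by exists false.
  - by rewrite card_unit.
  - by move=> s t [] [].
case: (trunc_until_decider d (self_code d)) => [[T HT Htrunc] | [Hnever Htrunc]].
- have Hyes := (decide _ Htrunc).1 (has_crisp_height_bounded T).
  by have := eval_functional Hyes (run_sound HT).
- have [n0 Hn0] := run_complete ((decide _ Htrunc).2 no_crisp_height_unbounded).
  exact: Hnever n0 (Hn0 n0 (leqnn n0)).
Qed.
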